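(* Let $\mathcal{H}\subseteq\mathcal{G}$ be a dense subsemigroup, let $k\ge2$, let $S\subseteq\mathcal{H}$ be strongly $k$-product-free, and let $W\subseteq S$ be a finite subset with unique products in $\mathcal{H}$. Then \[\bar{d}_{\mathcal{H}}(S)\le \frac{1}{1+\frac{\mu(W)}{M}+\cdots+\left(\frac{\mu(W)}{M}\right)^{k-1}}.\]
   Context: $\mathcal{A}$ is a finite alphabet with $|\mathcal{A}|\ge2$, $\mathcal{F}$ the free group over $\mathcal{A}$, elements identified with reduced words, $|w|$ the reduced length. Fix $x,y\in\mathcal{A}\cup\mathcal{A}^{-1}$ with $x\ne y^{-1}$, and let $\mathcal{G}$ be the subsemigroup of $\mathcal{F}$ consisting of reduced words beginning with $x$ and ending with $y$, together with the empty word. $M=\frac{2|\mathcal{A}|}{2|\mathcal{A}|-1}$. The measure $\mu$ on $\mathcal{F}$ is $\mu(\{w\})=\frac{1}{2|\mathcal{A}|(2|\mathcal{A}|-1)^{|w|-1}}$ for nonempty $w$ (each length layer has total weight one), extended additively to sets. For $A\subseteq\mathcal{F}$, $A_{\le n}=\{w\in A:|w|\le n\}$; for $A\subseteq\mathcal{H}$, $\bar{d}_{\mathcal{H}}(A)=\limsup_{n\to\infty}\mu(A_{\le n})/\mu(\mathcal{H}_{\le n})$. $\mathcal{H}$ is dense if there is a fixed $\delta>0$ with $\mu(\mathcal{H}_{\le n})>\delta\mu(\mathcal{F}_{\le n})>0$ for all large $n$; it is a subsemigroup if $\alpha\beta\in\mathcal{H}$ for all $\alpha,\beta\in\mathcal{H}$.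 $W\subseteq\mathcal{H}$ has unique products in $\mathcal{H}$ if the map $W\times\mathcal{H}\to\mathcal{H}$, $(w,h)\mapsto wh$, is injective. A set is strongly $k$-product-free if for every $2\le\ell\le k$ there are no $x_1,\dots,x_\ell,z$ in it with $x_1\cdots x_\ell=z$. *)

From HB Require Import structures.
From mathcomp Require Import all_boot all_order all_algebra.
From mathcomp Require Import all_classical all_reals all_analysis.
Set Implicit Arguments. Unset Strict Implicit. Unset Printing Implicit Defensive.
Import Order.TTheory GRing.Theory Num.Theory.
Local Open Scope ring_scope.

Section FreeGroup.
Variable A : finType.

(* a letter is a generator (a, false) or its inverse (a, true) *)
Definition letter := (A * bool)%type.
Definition linv (x : letter) : letter := (x.1, ~~ x.2).
Definition word := seq letter.

Fixpoint reduced (w : word) : bool :=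
  match w with
  | x :: ((y :: _) as w') => (y != linv x) && reduced w'
  | _ => true
  end.

Definition push (x : letter) (w : word) : word :=
  match w with
  | y :: w' => if y == linv x then w' else x :: w
  | [::] => [:: x]
  end.
Definition reduce (w : word) : word := foldr push [::] w.

Definition fmul (u v : word) : word := reduce (u ++ v).
Definition fprod (xs : seq word) : word := foldr fmul [::] xs.

(* the semigroup G: reduced words starting with x and ending with y, plus empty word *)
Definition Gset (x y : letter) : pred word :=
  fun w => (w == [::]) || [&& reduced w, head x w == x & last y w == y].

Definition subsemigroup (H : pred word) : Prop :=
  forall a b, H a -> H b -> H (fmul a b).

Variable R : realType.

Definition two_a : R := (2 * #|A|)%:R.

(* point mass of mu; the empty word (length layer 0) gets mass 1 *)
Definition mu_pt (w : word) : R :=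
  if w is [::] then 1 else 1 / (two_a * (two_a - 1) ^+ (size w).-1).

Definition mu_le (S : pred word) (n : nat) : R :=
  \sum_(l < n.+1) \sum_(t : l.-tuple letter | reduced t && S t) mu_pt t.

(* mu of a finite set given as a duplicate-free list *)
Definition mu_fin (W : seq word) : R := \sum_(w <- W) mu_pt w.

Definition Mconst : R := two_a / (two_a - 1).

Definition dense_in_F (H : pred word) : Prop :=
  exists delta : R, 0 < delta /\
    exists N, forall n, (N <= n)%N ->
      delta * mu_le (fun _ => true) n < mu_le H n /\ 0 < delta * mu_le (fun _ => true) n.

Definition upper_density (H S : pred word) : \bar R :=
  limn_esup (fun n => (mu_le S n / mu_le H n)%:E).

Definition unique_products (H : pred word) (W : seq word) : Prop :=
  forall w1 w2 h1 h2, w1 \in W -> w2 \in W -> H h1 -> H h2 ->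
    fmul w1 h1 = fmul w2 h2 -> w1 = w2 /\ h1 = h2.

Definition strongly_product_free (k : nat) (S : pred word) : Prop :=
  forall l, (2 <= l <= k)%N -> forall xs : seq word,
    size xs = l -> all S xs -> ~~ S (fprod xs).

End FreeGroup.

From Pilot Require Import Defs.
From mathcomp Require Import all_boot all_order all_algebra.
From mathcomp Require Import all_classical all_reals all_analysis.
From mathcomp Require Import ring zify.
Import Order.TTheory GRing.Theory Num.Theory.
Set Implicit Arguments.
Unset Strict Implicit.
Local Open Scope classical_set_scope.
Local Open Scope ring_scope.

(* Words of G multiply by plain concatenation (x <> y^-1 rules out cancellation), so
   mu(uv) = M mu(u) mu(v) for nonempty u, v.  Hence, for j < k, the products
   w_1 ... w_j s with w_i in W and s in S_{<=m} have total mass (M mu(W))^j mu(S_{<=m});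
   they are pairwise distinct because W has unique products in H, and they lie in
   H_{<= m + (k-1) L}, where L bounds the lengths of the words of W.  Products with
   different j are distinct too: cancelling common left factors by unique products would
   exhibit an element of S as a product of between 2 and k elements of S.  As each length
   layer has mass at most 1, this gives
   (sum_{j<k} (M mu(W))^j) mu(S_{<=n}) <= mu(H_{<=n}) + (k-1) L, and since mu(H_{<=n})
   tends to infinity by density, the upper density of S is at most
   1 / sum_{j<k} (M mu(W))^j, which is at most the stated bound because M >= 1. *)

Section ReducedWords.
Variable A : finType.
Implicit Types (z : letter A) (u v w : word A).

Lemma linvK : involutive (@linv A).
Proof. by case=> a b; rewrite /linv /= negbK. Qed.

Lemma eq_linvC z z' : (z' == linv z) = (z == linv z').
Proof. by apply/eqP/eqP => ->; rewrite linvK. Qed.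

Definition prependable z w := if w is z' :: _ then z' != linv z else true.

Lemma reduced_cons z w : reduced (z :: w) = prependable z w && reduced w.
Proof. by case: w. Qed.

Lemma reduce_reduced w : reduced w -> reduce w = w.
Proof.
elim: w => // z w IHw; rewrite reduced_cons => /andP[zw rw].
rewrite /reduce /= -/(reduce w) IHw //.
by case: w zw {IHw rw} => //= z' w /negbTE ->.
Qed.

Lemma reduced_cat z u z' v : reduced (z :: u) -> reduced (z' :: v) ->
  z' != linv (last z u) -> reduced (z :: u ++ z' :: v).
Proof.
elim: u z => [|z1 u IHu] z; first by move=> _ rv zz'; rewrite reduced_cons rv andbT.
rewrite reduced_cons => /andP[zu ru] rv zz'.
by rewrite cat_cons reduced_cons; apply/andP; split; [exact: zu | exact: IHu].
Qed.

Lemma fmulw0 w : reduced w -> fmul w [::] = w.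
Proof. by rewrite /fmul cats0; exact: reduce_reduced. Qed.

Lemma Gset_reduced x y w : Gset x y w -> reduced w.
Proof. by case/orP => [/eqP -> | /and3P[]]. Qed.

Lemma Gset_fmul_cat x y u v : x != linv y -> Gset x y u -> Gset x y v ->
  u != [::] -> v != [::] -> fmul u v = u ++ v.
Proof.
case: u => [|z u] //; case: v => [|z' v] // xy.
move=> /orP[//|/and3P[ru _ /eqP /= lu]] /orP[//|/and3P[rv /eqP /= hv _]] _ _.
by rewrite /fmul reduce_reduced // cat_cons reduced_cat // hv lu.
Qed.

Fixpoint reduced_words l : seq (word A) :=
  if l is l'.+1 then
    [seq z :: w | w <- reduced_words l',
                  z <- [seq z <- index_enum (letter A) | prependable z w]]
  else [:: [::]].

Lemma mem_reduced_words l w : (w \in reduced_words l) = reduced w && (size w == l).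
Proof.
elim: l w => [|l IHl] [|z w] //; first by rewrite andbF.
  by apply/allpairsPdep => -[? [? []]].
apply/allpairsPdep/idP => [[w' [z' [w'l]]]|].
  by rewrite mem_filter => /andP[zw' _] [-> ->]; rewrite reduced_cons zw' -IHl.
rewrite reduced_cons eqSS => /andP[/andP[zw rw] wl]; exists w, z.
by rewrite IHl rw wl mem_filter zw mem_index_enum.
Qed.

Lemma uniq_reduced_words l : uniq (reduced_words l).
Proof.
elim: l => //= l IHl; apply: allpairs_uniq_dep => //.
- by move=> w _; rewrite filter_uniq ?index_enum_uniq.
- by move=> [w z] [w' z'] _ _ [-> ->].
Qed.

Definition reduced_ball n : seq (word A) :=
  [seq w | l <- iota 0 n.+1, w <- reduced_words l].

Lemma mem_reduced_ball n w : (w \in reduced_ball n) = reduced w && (size w <= n)%N.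
Proof.
apply/allpairsPdep/andP => [[l [w' [+ + ->]]]|[rw wn]].
  by rewrite mem_iota mem_reduced_words => /andP[_ ln] /andP[-> /eqP ->].
by exists (size w), w; rewrite mem_iota mem_reduced_words rw eqxx.
Qed.

Lemma uniq_reduced_ball n : uniq (reduced_ball n).
Proof.
apply: allpairs_uniq_dep; [exact: iota_uniq | by move=> l _; exact: uniq_reduced_words|].
move=> [l w] [l' w'] /allpairsPdep[l1 [w1 [_ w1l e1]]] /allpairsPdep[l2 [w2 [_ w2l e2]]].
case: e1 w1l => -> ->; case: e2 w2l => -> ->.
by rewrite !mem_reduced_words /= => /andP[_ /eqP <-] /andP[_ /eqP <-] ->.
Qed.

Lemma card_letter : #|{: letter A}| = (2 * #|A|)%N.
Proof. by rewrite card_prod card_bool mulnC. Qed.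

End ReducedWords.

Section PointMass.
Variables (A : finType) (R : realType).
Hypothesis A_gt0 : (0 < #|A|)%N.
Implicit Types (u v w : word A).

Let two_a_gt1 : 1 < two_a A R.
Proof. by rewrite /two_a ltr1n; lia. Qed.

Let two_a_neq0 : two_a A R != 0.
Proof. by rewrite gt_eqF // (lt_trans ltr01). Qed.

Let two_a_subr1_neq0 : two_a A R - 1 != 0.
Proof. by rewrite subr_eq0 gt_eqF. Qed.

Lemma mu_pt_gt0 w : 0 < mu_pt R w.
Proof.
case: w => [|z w] /=; first exact: ltr01.
rewrite divr_gt0 ?ltr01 // mulr_gt0 ?exprn_gt0 ?subr_gt0 //.
exact: lt_trans two_a_gt1.
Qed.

Lemma Mconst_ge1 : 1 <= Mconst A R.
Proof. by rewrite /Mconst ler_pdivlMr ?subr_gt0 // mul1r lerBlDr lerDl. Qed.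

Lemma mu_pt_cat u v : u != [::] -> v != [::] ->
  mu_pt R (u ++ v) = Mconst A R * mu_pt R u * mu_pt R v.
Proof.
case: u => [|z u] //; case: v => [|z' v] // _ _.
rewrite cat_cons /= size_cat /= addnS exprS exprD /Mconst.
move: two_a_neq0 two_a_subr1_neq0; move: (two_a A R) => a a0 a1.
by field; rewrite a0 a1 !expf_neq0.
Qed.

Lemma sum_prepend_mu_pt w : \sum_(z | prependable z w) mu_pt R (z :: w) = mu_pt R w.
Proof.
case: w => [|z' w] /=.
  rewrite sumr_const (_ : #|_| = #|{: letter A}|) // card_letter -mulr_natr.
  by rewrite -/(two_a A R) expr0 mulr1 div1r mulVf.
under eq_bigl do rewrite eq_linvC.
rewrite sumr_const (_ : #|_| = #|predC1 (linv z')|) // cardC1 card_letter.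
rewrite -mulr_natr -subn1 natrB ?muln_gt0 // -/(two_a A R) exprS.
move: two_a_neq0 two_a_subr1_neq0; move: (two_a A R) => a a0 a1.
by field; rewrite a0 a1 expf_neq0.
Qed.

Lemma sum_reduced_words_mu_pt l : \sum_(w <- reduced_words A l) mu_pt R w = 1.
Proof.
elim: l => [|l IHl]; first by rewrite big_seq1.
rewrite big_allpairs_dep -[RHS]IHl; apply: eq_bigr => w _.
by rewrite big_filter sum_prepend_mu_pt.
Qed.

Lemma sum_reduced_words_le1 (P : pred (word A)) l :
  \sum_(w <- reduced_words A l | P w) mu_pt R w <= 1.
Proof.
rewrite -(sum_reduced_words_mu_pt l) [leRHS](bigID P) /= lerDl.
by apply: sumr_ge0 => w _; exact/ltW/mu_pt_gt0.
Qed.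

Lemma sum_reduced_tuples (P : pred (word A)) l :
  \sum_(t : l.-tuple (letter A) | reduced t && P t) mu_pt R t =
  \sum_(w <- reduced_words A l | P w) mu_pt R w.
Proof.
rewrite -(big_map val (fun w => reduced w && P w) (mu_pt R)) -big_filter -[RHS]big_filter.
apply: perm_big; apply: uniq_perm.
- by rewrite filter_uniq // map_inj_uniq ?index_enum_uniq //; exact: val_inj.
- by rewrite filter_uniq // uniq_reduced_words.
move=> w; rewrite !mem_filter mem_reduced_words.
have -> : (w \in map val (index_enum {: l.-tuple (letter A)})) = (size w == l).
  apply/mapP/idP => [[t _ ->]|wl]; first by rewrite size_tuple.
  by exists (Tuple wl); rewrite ?mem_index_enum.
by case: (reduced w); case: (P w).
Qed.

Lemma mu_leE (P : pred (word A)) n :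
  mu_le R P n = \sum_(w <- reduced_ball A n | P w) mu_pt R w.
Proof.
rewrite /mu_le [RHS]big_mkcond big_allpairs_dep.
rewrite -[X in iota 0 X]subn0 -/(index_iota 0 n.+1) big_mkord.
by apply: eq_bigr => l _; rewrite sum_reduced_tuples; exact: big_mkcond.
Qed.

Lemma mu_leT n : mu_le R (fun _ : word A => true) n = n.+1%:R.
Proof.
rewrite /mu_le (eq_bigr (fun _ => 1)) ?sumr_const ?card_ord // => l _.
by rewrite (sum_reduced_tuples xpredT) sum_reduced_words_mu_pt.
Qed.

Lemma mu_le_addn (P : pred (word A)) n c : mu_le R P (n + c) <= mu_le R P n + c%:R.
Proof.
elim: c => [|c IHc]; first by rewrite addn0 addr0.
rewrite /mu_le addnS big_ord_recr /= -/(mu_le R P (n + c)) -natr1 addrA.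
by rewrite lerD // sum_reduced_tuples sum_reduced_words_le1.
Qed.

End PointMass.

Lemma ler_sum_uniq_subset (T : eqType) (R : numDomainType) (F : T -> R) (s r : seq T) :
  uniq s -> uniq r -> {subset s <= r} -> (forall x, x \in r -> 0 <= F x) ->
  \sum_(x <- s) F x <= \sum_(x <- r) F x.
Proof.
move=> us ur sr F0; rewrite [leRHS](bigID (mem s)) /=.
have -> : \sum_(x <- r | x \in s) F x = \sum_(x <- s) F x.
  rewrite -big_filter; apply/perm_big/uniq_perm; rewrite ?filter_uniq // => x.
  by rewrite mem_filter andb_idr //; exact: sr.
by rewrite lerDl big_seq_cond sumr_ge0 // => x /andP[/F0].
Qed.

Section Translates.
Variables (A : finType) (x y : letter A) (H S : pred (word A)) (W : seq (word A)).
Hypotheses (xy : x != linv y) (HG : forall w, H w -> Gset x y w)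
  (H_semi : subsemigroup H) (SH : forall w, S w -> H w) (WS : all S W) (S_nil : ~~ S [::]).
Implicit Types (u w : word A) (ws : seq (word A)) (L : seq (word A)).

Definition lmul_seq L := [seq fmul w u | w <- W, u <- L].

Definition max_size := (\max_(w <- W) size w)%N.

Lemma iter_lmul_seqP L j u : u \in iter j lmul_seq L ->
  exists ws s, [/\ size ws = j, all (mem W) ws, s \in L & u = foldr (@fmul A) s ws].
Proof.
elim: j u => [|j IHj] u /=; first by exists [::], u.
case/allpairsP => -[w t] /= [wW /IHj[ws [s [wsj wsW sL ->]]] ->].
by exists (w :: ws), s; split => //=; rewrite ?wsj ?wW.
Qed.

Lemma size_flatten_le ws : all (mem W) ws -> (size (flatten ws) <= size ws * max_size)%N.
Proof.
elim: ws => //= w ws IHws /andP[wW wsW].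
by rewrite size_cat mulSn leq_add ?IHws // leq_bigmax_seq.
Qed.

Lemma foldr_fmul_H ws s : all (mem W) ws -> H s -> H (foldr (@fmul A) s ws).
Proof.
move=> + Hs; elim: ws => //= w ws IHws /andP[wW wsW].
by apply: H_semi; [exact/SH/(allP WS) | exact: IHws].
Qed.

Lemma W_neq0 w : w \in W -> w != [::].
Proof. by move=> wW; apply: contraNneq S_nil => <-; exact: (allP WS). Qed.

Lemma foldr_fmul_cat ws s : all (mem W) ws -> H s -> s != [::] ->
  foldr (@fmul A) s ws = flatten ws ++ s.
Proof.
move=> + Hs s0; elim: ws => //= w ws IHws /andP[wW wsW].
have Hws := foldr_fmul_H wsW Hs; rewrite IHws // in Hws *.
have ws_s0 : flatten ws ++ s != [::] by case: (flatten ws) s0.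
by rewrite (Gset_fmul_cat xy (HG (SH (allP WS w wW))) (HG Hws) (W_neq0 wW) ws_s0) catA.
Qed.

Lemma iter_lmul_seq_H L j u : {subset L <= S} -> u \in iter j lmul_seq L ->
  H u /\ u != [::].
Proof.
move=> LS /iter_lmul_seqP[ws [s [_ wsW /LS Ss ->]]].
have s0 : s != [::] by apply: contraNneq S_nil => <-.
split; first exact/foldr_fmul_H/SH.
by rewrite foldr_fmul_cat ?SH //; case: (flatten ws) s0.
Qed.

Lemma iter_lmul_seq_ball m n j u : (m + j * max_size <= n)%N ->
  u \in iter j lmul_seq [seq v <- reduced_ball A m | S v] ->
  u \in [seq v <- reduced_ball A n | H v].
Proof.
move=> mjn uL; have LS : {subset [seq v <- reduced_ball A m | S v] <= S}.
  by move=> v; rewrite mem_filter => /andP[].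
have [Hu _] := iter_lmul_seq_H LS uL.
have [ws [s [wsj wsW]]] := iter_lmul_seqP uL.
rewrite mem_filter mem_reduced_ball => /andP[Ss /andP[_ sm]] ue.
rewrite mem_filter mem_reduced_ball Hu (Gset_reduced (HG Hu)) /= (leq_trans _ mjn) //.
rewrite ue foldr_fmul_cat ?SH // ?size_cat; last by apply: contraNneq S_nil => <-.
by rewrite addnC leq_add // -wsj size_flatten_le.
Qed.

Hypothesis W_uniq : uniq W.
Hypothesis W_up : unique_products H W.

Lemma uniq_lmul_seq L : uniq L -> {in L, forall u, H u} -> uniq (lmul_seq L).
Proof.
move=> Lu LH; apply: allpairs_uniq => // -[w u] [w' u'].
move=> /allpairsP[[? ?] [/= wW uL [-> ->]]] /allpairsP[[? ?] [/= wW' uL' [-> ->]]] /= e.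
by have [-> ->] := W_up wW wW' (LH _ uL) (LH _ uL') e.
Qed.

Lemma uniq_iter_lmul_seq L j : uniq L -> {subset L <= S} -> uniq (iter j lmul_seq L).
Proof.
move=> Lu LS; elim: j => //= j IHj.
by apply: uniq_lmul_seq => // u /(iter_lmul_seq_H LS)[].
Qed.

Lemma sum_lmul_seq (R : realType) L : (0 < #|A|)%N -> {in L, forall u, H u /\ u != [::]} ->
  \sum_(u <- lmul_seq L) mu_pt R u = Mconst A R * mu_fin R W * \sum_(u <- L) mu_pt R u.
Proof.
move=> A_gt0 LH.
transitivity (\sum_(w <- W) \sum_(u <- L) mu_pt R (fmul w u)); first exact: big_allpairs_dep.
rewrite /mu_fin -mulrA mulr_suml mulr_sumr; apply: eq_big_seq => w wW.
rewrite mulrA mulr_sumr; apply: eq_big_seq => u /LH[Hu u0].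
have Hw : H w by exact/SH/(allP WS).
rewrite (Gset_fmul_cat xy (HG Hw) (HG Hu) (W_neq0 wW) u0).
by rewrite (mu_pt_cat R A_gt0 (W_neq0 wW) u0).
Qed.

Lemma sum_iter_lmul_seq (R : realType) L j : (0 < #|A|)%N -> {subset L <= S} ->
  \sum_(u <- iter j lmul_seq L) mu_pt R u =
  (Mconst A R * mu_fin R W) ^+ j * \sum_(u <- L) mu_pt R u.
Proof.
move=> A_gt0 LS; elim: j => [|j IHj] /=; first by rewrite expr0 mul1r.
by rewrite sum_lmul_seq // ?IHj ?exprS ?mulrA // => u /(iter_lmul_seq_H LS).
Qed.

Lemma foldr_fmul_neq k ws s ws' s' : strongly_product_free k S ->
  all (mem W) ws -> all (mem W) ws' -> S s -> S s' ->
  (size ws < size ws')%N -> (size ws' < k)%N ->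
  foldr (@fmul A) s ws != foldr (@fmul A) s' ws'.
Proof.
move=> spf; elim: ws ws' => [|w ws IHws] [|w' ws'] // wsW ws'W Ss Ss' lt lt'.
  have {}ws'W : all S (w' :: ws') by apply/allP => v /(allP ws'W) /(allP WS).
  have xsS : all S (w' :: ws' ++ [:: s']) by rewrite -cat_cons all_cat ws'W /= Ss'.
  have xs_size : size (w' :: ws' ++ [:: s']) = (size ws').+2 by rewrite /= size_cat addn1.
  have := spf _ (lt' : (2 <= (size ws').+2 <= k)%N) _ xs_size xsS.
  rewrite /Defs.fprod -cat_cons foldr_cat /= fmulw0 ?(Gset_reduced (HG (SH Ss'))) //.
  by apply: contraNneq => <-.
move: wsW ws'W => /andP[wW wsW] /andP[w'W ws'W].
apply: contra_neq (IHws ws' wsW ws'W Ss Ss' _ (ltnW lt')) => // e.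
by have [_ ->] := W_up wW w'W (foldr_fmul_H wsW (SH Ss)) (foldr_fmul_H ws'W (SH Ss')) e.
Qed.

Lemma iter_lmul_seq_disjoint k L i j u : strongly_product_free k S -> {subset L <= S} ->
  (i < j)%N -> (j < k)%N -> u \in iter i lmul_seq L -> u \notin iter j lmul_seq L.
Proof.
move=> spf LS ij jk /iter_lmul_seqP[ws [s [wsi wsW /LS Ss ->]]].
apply/negP => /iter_lmul_seqP[ws' [s' [ws'j ws'W /LS Ss' e]]].
by move: e; apply/eqP; rewrite (foldr_fmul_neq spf) ?wsi ?ws'j.
Qed.

Lemma translates_mu_le (R : realType) k m : (0 < #|A|)%N -> strongly_product_free k S ->
  (\sum_(j < k) (Mconst A R * mu_fin R W) ^+ j) * mu_le R S m <=
  mu_le R H (m + k.-1 * max_size).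
Proof.
move=> A_gt0 spf; set L := [seq u <- reduced_ball A m | S u].
have LS : {subset L <= S} by move=> u; rewrite mem_filter => /andP[].
have L_uniq : uniq L by rewrite filter_uniq ?uniq_reduced_ball.
set T := [seq u | j <- iota 0 k, u <- iter j lmul_seq L].
have -> : (\sum_(j < k) (Mconst A R * mu_fin R W) ^+ j) * mu_le R S m =
          \sum_(u <- T) mu_pt R u.
  transitivity (\sum_(j <- iota 0 k) \sum_(u <- iter j lmul_seq L) mu_pt R u).
    rewrite -[X in iota 0 X]subn0 -/(index_iota 0 k) big_mkord mulr_suml.
    apply: eq_bigr => j _.
    by rewrite sum_iter_lmul_seq // mu_leE big_filter.
  by symmetry; exact: big_allpairs_dep.
rewrite mu_leE -[leRHS]big_filter; apply: ler_sum_uniq_subset.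
- apply: allpairs_uniq_dep => [|j _|]; first exact: iota_uniq.
    exact: uniq_iter_lmul_seq.
  move=> p q /allpairsPdep[i [u [+ ui ->]]] /allpairsPdep[j [v [+ vj ->]]] /= uv.
  rewrite !mem_iota /= -uv in vj * => ik jk.
  have [ij|ji|-> //] := ltngtP i j.
  + by rewrite (negPf (iter_lmul_seq_disjoint spf LS ij jk ui)) in vj.
  + by rewrite (negPf (iter_lmul_seq_disjoint spf LS ji ik vj)) in ui.
- by rewrite filter_uniq ?uniq_reduced_ball.
- move=> u /allpairsPdep[j [v [jk vL ->]]]; apply: iter_lmul_seq_ball vL.
  by rewrite mem_iota in jk; apply: leq_add => //; apply: leq_mul => //; lia.
- by move=> u _; exact/ltW/mu_pt_gt0.
Qed.

End Translates.

Lemma strongly_product_free_nil (A : finType) (S : pred (word A)) k :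
  (2 <= k)%N -> strongly_product_free k S -> ~~ S [::].
Proof.
move=> hk spf; apply/negP => S0.
by have := spf 2 hk [:: [::]; [::]] erefl; rewrite /= S0 => /(_ isT)/negP.
Qed.

Lemma sum_exprn_ge1 (R : numDomainType) (q : R) k : 0 <= q -> (0 < k)%N ->
  1 <= \sum_(i < k) q ^+ i.
Proof.
case: k => // k q0 _; rewrite big_ord_recl expr0 lerDl.
by apply: sumr_ge0 => i _; exact: exprn_ge0.
Qed.

Lemma ler_sum_exprn (R : numDomainType) (p q : R) k : 0 <= p -> p <= q ->
  \sum_(i < k) p ^+ i <= \sum_(i < k) q ^+ i.
Proof.
move=> p0 pq; apply: ler_sum => i _.
by apply: (lerXn2r i); rewrite ?nnegrE // (le_trans p0 pq).
Qed.

Lemma limn_esup_le_near (R : realType) (u : (\bar R)^nat) (l : \bar R) :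
  (\forall n \near \oo, (u n <= l)%E) -> (limn_esup u <= l)%E.
Proof.
move=> [N _ ul]; apply: (@le_trans _ _ (ereal_sup (u @` [set n | (N <= n)%N]))).
  by apply: ereal_inf_lbound; exists [set n | (N <= n)%N] => //; exists N.
by apply: ge_ereal_sup => _ [n /= Nn <-]; exact: ul.
Qed.

Lemma limn_esup_ratio_le (R : realType) (s h : R^nat) (a c : R) : 0 < a ->
  h @ \oo --> +oo -> (forall n, a * s n <= h n + c) ->
  (limn_esup (fun n => (s n / h n)%:E) <= (a^-1)%:E)%E.
Proof.
move=> a0 h_oo ash; apply/lee_addgt0Pr => e e0.
apply: limn_esup_le_near; apply: filterS (cvgry_gt h_oo (Num.max 0 (c / (a * e)))) => n.
rewrite gt_max => /andP[hn0 hn].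
rewrite -EFinD lee_fin ler_pdivrMr // -(ler_pM2l a0) mulrA mulrDr mulfV ?gt_eqF //.
rewrite mulrDl mul1r; apply: le_trans (ash n) _.
by rewrite lerD2l; apply/ltW; rewrite mulrC -ltr_pdivrMr ?mulr_gt0.
Qed.

Lemma dense_mu_le_cvgy (A : finType) (R : realType) (H : pred (word A)) :
  (0 < #|A|)%N -> dense_in_F R H -> mu_le R H n @[n --> \oo] --> +oo.
Proof.
move=> A_gt0 [d [d0 [N dN]]]; apply: (@ger_cvgy _ _ _ _ (fun n => d * n%:R)).
  exists N => // n /= /dN[+ _]; rewrite mu_leT // => /ltW; apply: le_trans.
  by rewrite ler_pM2l // ler_nat.
apply/cvgryPge => M; apply: filterS (cvgry_ge cvgr_idn (M / d)) => n /=.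
by rewrite ler_pdivrMr // mulrC.
Qed.

Unset Implicit Arguments.

Theorem lemma3p1 (R : realType) (A : finType) (hA : (2 <= #|A|)%N)
    (x y : letter A) (hxy : x != linv y)
    (H S : pred (word A)) (W : seq (word A)) (k : nat)
    (hHG : forall w, H w -> Gset x y w)
    (hHsemi : subsemigroup H)
    (hHdense : @dense_in_F A R H)
    (hk : (2 <= k)%N)
    (hSH : forall w, S w -> H w)
    (hS : strongly_product_free k S)
    (hWuniq : uniq W)
    (hWS : all S W)
    (hWup : unique_products H W) :
  (@upper_density A R H S <=
    (1 / \sum_(i < k) (@mu_fin A R W / @Mconst A R) ^+ i)%:E)%E.
Proof.
have A_gt0 : (0 < #|A|)%N := ltnW hA.
have S_nil := strongly_product_free_nil hk hS.
have W_ge0 : 0 <= mu_fin R W by apply: sumr_ge0 => w _; exact/ltW/mu_pt_gt0.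
have M_ge1 := Mconst_ge1 R A_gt0.
have M_gt0 : 0 < Mconst A R := lt_le_trans ltr01 M_ge1.
set q := Mconst A R * mu_fin R W.
have q_ge0 : 0 <= q := mulr_ge0 (ltW M_gt0) W_ge0.
have sum_ge1 : 1 <= \sum_(j < k) q ^+ j := sum_exprn_ge1 q_ge0 (ltnW hk).
apply: le_trans (limn_esup_ratio_le (lt_le_trans ltr01 sum_ge1)
  (dense_mu_le_cvgy A_gt0 hHdense) (fun n => le_trans
    (translates_mu_le hxy hHG hHsemi hSH hWS S_nil hWuniq hWup R n A_gt0 hS)
    (mu_le_addn R A_gt0 H n _))) _.
have Wq_ge0 : 0 <= mu_fin R W / Mconst A R := divr_ge0 W_ge0 (ltW M_gt0).
have sum'_ge1 := sum_exprn_ge1 Wq_ge0 (ltnW hk).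
rewrite lee_fin div1r lef_pV2 ?posrE ?(lt_le_trans ltr01) //.
apply: ler_sum_exprn Wq_ge0 _; rewrite ler_pdivrMr //.
exact: le_trans (ler_peMl W_ge0 M_ge1) (ler_peMr q_ge0 M_ge1).
Qed.
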